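(* Fix a time $t \ge 0$ and an evaluation policy $\pi_e$. Assume (common support) that for all $x \in \mathcal{X}$ and $a \in \mathcal{A}$, $\pi_e(a\mid x)>0$ implies $\pi_0(a\mid x)>0$; assume (conditional independent censoring) that $L$ and $C$ are conditionally independent given $(x,a)$; and assume censoring is present, i.e. $P(L>C)>0$. Let $\hat S(x,a,t)$ be any fixed (non-random, not depending on $\mathcal{D}$) outcome model. Then the naive IPS estimator $$\hat V_{\mathrm{IPS}}(\pi_e,t;\mathcal{D}) = \frac1n\sum_{i=1}^n w(x_i,a_i)\,\mathbb{I}\{T_i>t\}$$ and the naive DR estimator $$\hat V_{\mathrm{DR}}(\pi_e,t;\mathcal{D}) = \frac1n\sum_{i=1}^n\Big\{ w(x_i,a_i)\big(\mathbb{I}\{T_i>t\}-\hat S(x_i,a_i,t)\big)+\sum_{a\in\mathcal{A}}\pi_e(a\mid x_i)\hat S(x_i,a,t)\Big\},$$ where $w(x,a)=\pi_e(a\mid x)/\pi_0(a\mid x)$, have the same bias $$\mathrm{Bias}[\hat V_{\mathrm{IPS}}]=\mathrm{Bias}[\hat V_{\mathrm{DR}}]=\mathbb{E}_{p(x)\pi_e(a\mid x)}\big[S(x,a,t)\,(G(t\mid x,a)-1)\big],$$ where $\mathrm{Bias}[\hat V]=\mathbb{E}_{\mathcal{D}}[\hat V]-V(\pi_e,t)$.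
   Context: Let $\mathcal{X}$ be a context space and $\mathcal{A}$ a finite action set. A policy $\pi(a\mid x)$ is a conditional distribution over $\mathcal{A}$ given $x$. The logged data $\mathcal{D}=\{(x_i,a_i,T_i,r_i)\}_{i=1}^n$ consists of $n$ i.i.d. draws generated by $(x,a,L,C)\sim p(x)\pi_0(a\mid x)p(L,C\mid x,a)$ for a logging policy $\pi_0$, where $L\ge 0$ is the latent survival time, $C\ge 0$ the censoring time, and only $T=\min\{L,C\}$ and $r=\mathbb{I}\{L\le C\}$ are observed. Define the survival function $S(x,a,t)=P(L>t\mid x,a)$, the censoring survival function $G(t\mid x,a)=P(C>t\mid x,a)$, and the policy value $V(\pi_e,t)=\mathbb{E}_{p(x)\pi_e(a\mid x)}[S(x,a,t)]$. *)

From HB Require Import structures.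
From mathcomp Require Import all_boot all_order all_algebra.
From mathcomp Require Import all_classical all_reals all_analysis.
From mathcomp Require Import measurable_realfun.
Set Implicit Arguments. Unset Strict Implicit. Unset Printing Implicit Defensive.
Import Order.TTheory GRing.Theory Num.Theory.
Import numFieldNormedType.Exports.
Local Open Scope classical_set_scope.
Local Open Scope ring_scope.

Section Defs.
Context {R : realType} {dX : measure_display} {X : measurableType dX}
  {A : finType}.

(* A policy pi : X -> A -> R, pi x a = pi(a | x). *)
Definition is_policy (pi : X -> A -> R) : Prop :=
  (forall x a, 0 <= pi x a) /\ (forall x, \sum_(a : A) pi x a = 1) /\
  (forall a, measurable_fun setT (fun x => pi x a)).

(* Conditional law of (L, C) given (x, a): K x a is a probability on R * R,
   first component = latent survival time L, second = censoring time C. *)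
Definition is_outcome_kernel (K : X -> A -> probability (R * R)%type R) : Prop :=
  (forall a E, measurable E -> measurable_fun [set: X] (fun x => K x a E)) /\
  (forall x a, K x a [set y | 0 <= y.1 /\ 0 <= y.2] = 1%E).

Definition surv (K : X -> A -> probability (R * R)%type R) x a (t : R) : R :=
  fine (K x a [set y | t < y.1]).

Definition csurv (K : X -> A -> probability (R * R)%type R) (t : R) x a : R :=
  fine (K x a [set y | t < y.2]).

Definition cond_indep_censoring (K : X -> A -> probability (R * R)%type R) : Prop :=
  forall x a (E1 E2 : set R), measurable E1 -> measurable E2 ->
    K x a (E1 `*` E2) = (K x a (E1 `*` setT) * K x a (setT `*` E2))%E.

Definition model_prob (px : probability X R) (pi0 : X -> A -> R)
    (K : X -> A -> probability (R * R)%type R)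
    (S : {set A}) (B : set X) (E : set (R * R)) : \bar R :=
  (\sum_(a in S) \int[px]_(x in B) ((pi0 x a)%:E * K x a E))%E.

Definition censoring_present px pi0 K : Prop :=
  (0 < model_prob px pi0 K [set: A]%SET setT [set y | (y.2 < y.1)%R])%E.

Definition policy_value (px : probability X R) (pie : X -> A -> R) K (t : R)
  : \bar R := (\int[px]_x (\sum_(a : A) pie x a * surv K x a t)%:E)%E.

Definition iw (pie pi0 : X -> A -> R) x a : R := pie x a / pi0 x a.

Section Data.
Context {dO : measure_display} {Omega : measurableType dO} {n : nat}.
Variables (Xs : 'I_n -> Omega -> X) (As : 'I_n -> Omega -> A)
  (Ls Cs : 'I_n -> Omega -> R).

Definition data_event (i : 'I_n) (S : {set A}) (B : set X) (E : set (R * R))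
  : set Omega := [set w | As i w \in S /\ B (Xs i w) /\ E (Ls i w, Cs i w)].

Definition data_measurable : Prop :=
  forall i, measurable_fun setT (Xs i) /\ measurable_fun setT (Ls i) /\
    measurable_fun setT (Cs i) /\ (forall a, measurable [set w | As i w = a]).

Definition data_law (P : probability Omega R) px pi0 K : Prop :=
  forall i S B E, measurable B -> measurable E ->
    P (data_event i S B E) = model_prob px pi0 K S B E.

Definition data_indep (P : probability Omega R) : Prop :=
  forall (S : 'I_n -> {set A}) (B : 'I_n -> set X) (E : 'I_n -> set (R * R))
    (J : {set 'I_n}),
    (forall i, measurable (B i)) -> (forall i, measurable (E i)) ->
    P (\bigcap_(i in [set j | j \in J]) data_event i (S i) (B i) (E i))
    = (\prod_(i in J) fine (P (data_event i (S i) (B i) (E i))))%:E.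

Definition obs_time (i : 'I_n) (w : Omega) : R := Num.min (Ls i w) (Cs i w).

Definition indic (b : bool) : R := if b then 1 else 0.

Definition V_IPS (pie pi0 : X -> A -> R) (t : R) (w : Omega) : R :=
  n%:R^-1 * \sum_(i < n)
    iw pie pi0 (Xs i w) (As i w) * indic (t < obs_time i w).

Definition V_DR (pie pi0 : X -> A -> R) (Shat : X -> A -> R -> R) (t : R)
  (w : Omega) : R :=
  n%:R^-1 * \sum_(i < n)
    (iw pie pi0 (Xs i w) (As i w) *
       (indic (t < obs_time i w) - Shat (Xs i w) (As i w) t)
     + \sum_(a : A) pie (Xs i w) a * Shat (Xs i w) a t).

End Data.
End Defs.

(* By linearity of expectation only the law of a single logged record
   matters.  For each action a, the sub-probability
   B |-> P(a_i = a, x_i \in B, (L_i, C_i) \in E) has density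
   pi0(a|x) P((L, C) \in E | x, a) with respect to p(x), so
   E[1{(L_i, C_i) \in E} f(x_i, a_i)] = E_p[sum_a f(x, a) pi0(a|x) P(E | x, a)].
   Since T > t iff L > t and C > t, conditional independence turns
   P(T > t | x, a) into S(x, a, t) G(t | x, a), and common support gives
   w pi0 = pie; hence the IPS term has mean E_{p pie}[S G].  The two model
   terms of the DR estimator both have mean E_{p pie}[Shat] and cancel, so
   both estimators have mean E_{p pie}[S G], and subtracting
   V = E_{p pie}[S] leaves E_{p pie}[S (G - 1)]. *)

From Pilot Require Import Defs.
From HB Require Import structures.
From mathcomp Require Import all_boot all_order all_algebra.
From mathcomp Require Import all_classical all_reals all_analysis.
From mathcomp Require Import measurable_realfun.
Set Implicit Arguments.
Unset Strict Implicit.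
Unset Printing Implicit Defensive.

Import Order.TTheory GRing.Theory Num.Theory.
Import numFieldNormedType.Exports.
Local Open Scope classical_set_scope.
Local Open Scope ring_scope.

Lemma measurable_inv (R : realType) : measurable_fun [set: R] GRing.inv.
Proof.
rewrite -(setUv [set 0]) setUC; apply/measurable_funU => //.
- exact: measurableC.
- split; last exact: measurable_fun_set1.
  apply: subspace_continuous_measurable_fun; first exact: measurableC.
  apply: continuous_in_subspaceT => x /set_mem /eqP x0.
  exact: inv_continuous.
Qed.

Local Open Scope ereal_scope.

Section density.
Context d (T : measurableType d) (R : realType).
Variables (mu : {sigma_finite_measure set T -> \bar R})
  (nu : {finite_measure set T -> \bar R}) (g : T -> \bar R).
Hypotheses (g_ge0 : forall x, 0 <= g x) (mg : measurable_fun setT g)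
  (nuE : forall A, measurable A -> nu A = \int[mu]_(x in A) g x).

Lemma integral_density (f : T -> \bar R) : (forall x, 0 <= f x) ->
  measurable_fun setT f -> \int[mu]_x (f x * g x) = \int[nu]_x f x.
Proof.
move=> f0 mf.
have numu : nu `<< mu.
  apply/null_content_dominatesP => A mA muA0.
  by rewrite nuE //; apply: null_set_integral => //; exact: measurable_funS mg.
have gRN : ae_eq mu setT (Radon_Nikodym_SigmaFinite.f nu mu) g.
  apply: integral_ae_eq => //.
    exact: Radon_Nikodym_SigmaFinite.f_integrable.
  by move=> B _ mB; rewrite -Radon_Nikodym_SigmaFinite.f_integral // nuE.
rewrite -(Radon_Nikodym_SigmaFinite.change_of_variables numu) //.
apply: ae_eq_integral => //.
- exact: emeasurable_funM.
- apply: emeasurable_funM => //; apply: measurable_int.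
  exact: Radon_Nikodym_SigmaFinite.f_integrable.
- exact/ae_eqe_mul2l/ae_eq_sym.
Qed.

End density.

Section event_law.
Context d d' (T : measurableType d) (T' : measurableType d') (R : realType).
Variables (P : {finite_measure set T -> \bar R}) (D : set T) (phi : T -> T').

(* The unused measurability arguments let the measure instances below be
   found by unification. *)
Definition event_law (mD : measurable D) (mphi : measurable_fun setT phi)
  (B : set T') : \bar R := P (D `&` phi @^-1` B).

Hypotheses (mD : measurable D) (mphi : measurable_fun setT phi).

Let measurable_event B : measurable B -> measurable (D `&` phi @^-1` B).
Proof.
move=> mB; apply: measurableI mD _.
by rewrite -[X in measurable X]setTI; exact: mphi.
Qed.

Let event_law0 : event_law mD mphi set0 = 0.
Proof. by rewrite /event_law preimage_set0 setI0 measure0. Qed.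

Let event_law_ge0 B : 0 <= event_law mD mphi B.
Proof. exact: measure_ge0. Qed.

Let event_law_sigma_additive : semi_sigma_additive (event_law mD mphi).
Proof.
move=> F mF tF mUF; rewrite /event_law preimage_bigcup setI_bigcupr.
apply: measure_semi_sigma_additive.
- by move=> n; exact: measurable_event.
- apply/trivIsetP => /= i j _ _ ij; rewrite setIACA setIid -preimage_setI.
  by move/trivIsetP : tF => /(_ _ _ _ _ ij) ->//; rewrite preimage_set0 setI0.
- by apply: bigcup_measurable => n _; exact: measurable_event.
Qed.

HB.instance Definition _ := isMeasure.Build _ _ _ (event_law mD mphi)
  event_law0 event_law_ge0 event_law_sigma_additive.

Let event_law_fin : fin_num_fun (event_law mD mphi).
Proof. by move=> B mB; apply: fin_num_measure; exact: measurable_event. Qed.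

HB.instance Definition _ := Measure_isFinite.Build _ _ _ (event_law mD mphi)
  event_law_fin.

Lemma integral_event_law (f : T' -> \bar R) : (forall y, 0 <= f y) ->
  measurable_fun setT f ->
  \int[event_law mD mphi]_y f y = \int[P]_x ((\1_D x)%:E * f (phi x)).
Proof.
move=> f0 mf; transitivity (\int[mrestr P mD]_x f (phi x)).
  have := @ge0_integral_pushforward _ _ _ _ _ phi mphi (mrestr P mD) setT f.
  rewrite preimage_setT => <- //.
  apply: eq_measure_integral => B mB _.
  by rewrite /= /event_law /pushforward /mrestr setIC.
have mD1 : measurable_fun setT (fun x => (\1_D x : R)%:E).
  by apply/measurable_EFinP; exact: measurable_indic.
rewrite -(@integral_density _ _ _ P (mrestr P mD)
  (fun x => (\1_D x : R)%:E)) //.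
- by apply: eq_integral => x _; rewrite muleC.
- by move=> B mB; rewrite integral_indic // /mrestr setIC.
- exact: measurableT_comp.
Qed.

End event_law.

Lemma bounded_integrable d (T : measurableType d) (R : realType)
    (mu : {finite_measure set T -> \bar R}) (f : T -> R) (c : R) :
  measurable_fun setT f -> (forall x, `|f x| <= c)%R ->
  mu.-integrable setT (EFin \o f).
Proof.
move=> mf fc.
apply: le_integrable (finite_measure_integrable_cst mu c measurableT) => //.
- exact/measurable_EFinP.
- by move=> x _ /=; rewrite lee_fin (le_trans (fc x)) // ler_norm.
Qed.

Lemma ge0_fin_integrable d (T : measurableType d) (R : realType)
    (mu : {measure set T -> \bar R}) (f : T -> R) :
  measurable_fun setT f -> (forall x, 0 <= f x)%R ->
  \int[mu]_x (f x)%:E \is a fin_num -> mu.-integrable setT (EFin \o f).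
Proof.
move=> mf f0 ffin; apply/integrableP; split; first exact/measurable_EFinP.
by under eq_integral => x _ do rewrite /= ger0_norm //; rewrite ltey_eq ffin.
Qed.

Lemma ge0_integral_mean d (T : measurableType d) (R : realType)
    (mu : {measure set T -> \bar R}) n (g : 'I_n -> T -> R) (c : R) :
  (0 < n)%N -> (forall i, measurable_fun setT (g i)) ->
  (forall i x, 0 <= g i x)%R -> (forall i, \int[mu]_x (g i x)%:E = c%:E) ->
  \int[mu]_x (n%:R^-1 * \sum_(i < n) g i x)%:E = c%:E.
Proof.
move=> n_gt0 mg g0 gc.
under eq_integral do rewrite EFinM -sumEFin.
rewrite ge0_integralZl_EFin //; last 2 first.
- by move=> x _; rewrite sume_ge0 // => i _; rewrite lee_fin.
- by apply: emeasurable_sum => i; exact/measurable_EFinP.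
rewrite ge0_integral_sum //; last 2 first.
- by move=> i; exact/measurable_EFinP.
- by move=> i x _; rewrite lee_fin.
under eq_bigr do rewrite gc.
rewrite sumEFin sumr_const card_ord -EFinM -[(c *+ n)%R]mulr_natl mulrA.
by rewrite mulVf ?mul1r // pnatr_eq0 -lt0n.
Qed.

Lemma integral_meanB d (T : measurableType d) (R : realType)
    (mu : {measure set T -> \bar R}) n (f g : 'I_n -> T -> R) (cf cg : R) :
  (0 < n)%N ->
  (forall i, measurable_fun setT (f i)) ->
  (forall i, measurable_fun setT (g i)) ->
  (forall i x, 0 <= f i x)%R -> (forall i x, 0 <= g i x)%R ->
  (forall i, \int[mu]_x (f i x)%:E = cf%:E) ->
  (forall i, \int[mu]_x (g i x)%:E = cg%:E) ->
  \int[mu]_x (n%:R^-1 * \sum_(i < n) (f i x - g i x))%:E = (cf - cg)%:E.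
Proof.
move=> n_gt0 mf mg f0 g0 fc gc.
have mean_ge0 h : (forall i x, 0 <= h i x)%R ->
    forall x, (0 <= n%:R^-1 * \sum_(i < n) h i x)%R.
  by move=> h0 x; rewrite mulr_ge0 ?sumr_ge0.
have mean_mble (h : 'I_n -> T -> R) : (forall i, measurable_fun setT (h i)) ->
    measurable_fun setT (fun x => n%:R^-1 * \sum_(i < n) h i x)%R.
  by move=> mh; apply: measurable_funM => //; exact: measurable_sum.
have [fmean gmean] := (ge0_integral_mean n_gt0 mf f0 fc,
                       ge0_integral_mean n_gt0 mg g0 gc).
under eq_integral do rewrite sumrB mulrBr EFinB.
rewrite integralB_EFin // ?fmean ?gmean //.
- apply: ge0_fin_integrable; first exact: mean_mble.
    exact: mean_ge0.
  by rewrite fmean.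
- apply: ge0_fin_integrable; first exact: mean_mble.
    exact: mean_ge0.
  by rewrite gmean.
Qed.

Lemma probability_fine_ge0_le1 d (T : measurableType d) (R : realType)
    (mu : probability T R) (E : set T) :
  measurable E -> (0 <= fine (mu E) <= 1)%R.
Proof.
move=> mE; rewrite fine_ge0 //= -[1%R]/(fine 1); apply: fine_le => //.
- exact: fin_num_measure.
- exact: probability_le1.
Qed.

Section survival_events.
Context (R : realType) (t : R).

Lemma measurable_gt : measurable [set x : R | (t < x)%R].
Proof. by rewrite -set_itvoy; exact: measurable_itv. Qed.

Lemma measurable_fst_gt : measurable [set y : R * R | (t < y.1)%R].
Proof.
by rewrite -[X in measurable X]setTI; exact: measurable_fst measurable_gt.
Qed.

Lemma measurable_snd_gt : measurable [set y : R * R | (t < y.2)%R].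
Proof.
by rewrite -[X in measurable X]setTI; exact: measurable_snd measurable_gt.
Qed.

End survival_events.

Lemma measurable_fine_kernel (R : realType) (dX : measure_display)
    (X : measurableType dX) (A : finType)
    (K : X -> A -> probability (R * R)%type R) (K_kernel : is_outcome_kernel K)
    a (E : set (R * R)) :
  measurable E -> measurable_fun setT (fun x => fine (K x a E)).
Proof.
by move=> mE; apply: measurableT_comp => //; case: K_kernel => + _; apply.
Qed.

Section logged_data.
Context (R : realType) (dX : measure_display) (X : measurableType dX)
  (A : finType) (px : probability X R) (pi0 : X -> A -> R)
  (K : X -> A -> probability (R * R)%type R)
  (dO : measure_display) (Omega : measurableType dO) (P : probability Omega R)
  (n : nat) (Xs : 'I_n -> Omega -> X) (As : 'I_n -> Omega -> A)
  (Ls Cs : 'I_n -> Omega -> R).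
Hypotheses (pi0_policy : is_policy pi0) (K_kernel : is_outcome_kernel K)
  (data_mble : data_measurable Xs As Ls Cs)
  (law : data_law Xs As Ls Cs P px pi0 K).
Variable i : 'I_n.

Let mXs : measurable_fun setT (Xs i). Proof. by case: (data_mble i). Qed.

Let mAs a : measurable [set w | As i w = a].
Proof. by case: (data_mble i) => _ [_ [_]]. Qed.

Lemma measurable_outcome_event (E : set (R * R)) : measurable E ->
  measurable [set w | E (Ls i w, Cs i w)].
Proof.
have [_ [mL [mC _]]] := data_mble i.
by move=> mE; rewrite -[X in measurable X]setTI; exact: measurable_fun_pair.
Qed.

Lemma sum_indic_action (h : A -> R) w :
  h (As i w) = (\sum_a \1_[set w | As i w = a] w * h a)%R.
Proof.
rewrite (bigD1 (As i w)) //= indicE mem_set // mul1r big1 ?addr0 // => a aA.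
by rewrite indicE memNset ?mul0r //= => Aa; rewrite Aa eqxx in aA.
Qed.

Lemma measurable_fun_data (h : X -> A -> R) :
  (forall a, measurable_fun setT (h^~ a)) ->
  measurable_fun setT (fun w => h (Xs i w) (As i w)).
Proof.
move=> mh; under eq_fun do rewrite (sum_indic_action (h (Xs i _))).
apply: measurable_sum => a; apply: measurable_funM.
  exact: measurable_indic.
exact: measurableT_comp (mh a) mXs.
Qed.

Lemma integral_data_action a (E : set (R * R)) (h : X -> R) : measurable E ->
  measurable_fun setT h -> (forall x, 0 <= h x)%R ->
  \int[P]_w (\1_([set w | As i w = a] `&` [set w | E (Ls i w, Cs i w)]) w
             * h (Xs i w))%:E
  = \int[px]_x (h x * (pi0 x a * fine (K x a E)))%:E.
Proof.
move=> mE mh h0; set D := _ `&` _.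
have mD : measurable D.
  by apply: measurableI; [exact: mAs | exact: measurable_outcome_event].
have [pi0_ge0 [_ mpi0]] := pi0_policy.
transitivity (\int[event_law P mD mXs]_x (h x)%:E).
  by rewrite integral_event_law //; exact/measurable_EFinP.
rewrite -(@integral_density _ _ _ px (event_law P mD mXs)
  (fun x => (pi0 x a * fine (K x a E))%:E)) //.
- apply/measurable_EFinP; apply: measurable_funM => //.
  exact: measurable_fine_kernel.
- move=> B mB; rewrite /= /event_law.
  have -> : D `&` Xs i @^-1` B = data_event Xs As Ls Cs i [set a]%SET B E.
    apply/seteqP; split => w; rewrite /D /data_event /= inE.
    - by move=> [[/eqP ? ?] ?].
    - by move=> [/eqP ? []].
  rewrite law // /model_prob big_set1; apply: eq_integral => x _.
  by rewrite EFinM fineK // fin_num_measure.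
- exact/measurable_EFinP.
Qed.

Lemma integral_data (E : set (R * R)) (h : X -> A -> R) : measurable E ->
  (forall a, measurable_fun setT (h^~ a)) -> (forall x a, 0 <= h x a)%R ->
  \int[P]_w (\1_[set w | E (Ls i w, Cs i w)] w * h (Xs i w) (As i w))%:E
  = \int[px]_x (\sum_a h x a * (pi0 x a * fine (K x a E)))%:E.
Proof.
move=> mE mh h0.
transitivity (\int[P]_w (\sum_a
    (\1_([set w | As i w = a] `&` [set w | E (Ls i w, Cs i w)]) w
     * h (Xs i w) a)%:E)).
  apply: eq_integral => w _; rewrite sumEFin (sum_indic_action (h (Xs i w))).
  rewrite mulr_sumr; congr EFin; apply: eq_bigr => a _.
  by rewrite indicI /= mulrCA -mulrA.
rewrite ge0_integral_sum //; last 2 first.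
- move=> a; apply/measurable_EFinP; apply: measurable_funM.
    exact/measurable_indic/measurableI/measurable_outcome_event.
  exact: measurableT_comp (mh a) mXs.
- by move=> a w _; rewrite lee_fin mulr_ge0.
under eq_bigr => a _ do rewrite (integral_data_action a (h := h^~ a)) //.
under [RHS]eq_integral do rewrite -sumEFin.
rewrite ge0_integral_sum //.
- move=> a; apply/measurable_EFinP; apply: measurable_funM => //.
  apply: measurable_funM; last exact: measurable_fine_kernel.
  by case: pi0_policy => _ [].
- move=> a x _; rewrite lee_fin !mulr_ge0 //; first by case: pi0_policy.
  by case/andP: (probability_fine_ge0_le1 (K x a) mE).
Qed.

End logged_data.

Section policy_value.
Context (R : realType) (dX : measure_display) (X : measurableType dX)
  (A : finType) (px : probability X R) (pie : X -> A -> R).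
Hypothesis pie_policy : is_policy pie.

Lemma policy_average_ge0_le1 x (f : A -> R) : (forall a, 0 <= f a <= 1)%R ->
  (0 <= \sum_a pie x a * f a <= 1)%R.
Proof.
have [pie_ge0 [pie_sum1 _]] := pie_policy.
move=> f01; rewrite sumr_ge0 /= => [|a _]; last first.
  by rewrite mulr_ge0 //; case/andP: (f01 a).
rewrite -(pie_sum1 x) ler_sum // => a _.
by rewrite ler_piMr //; case/andP: (f01 a).
Qed.

Lemma integrable_policy_average (f : X -> A -> R) :
  (forall a, measurable_fun setT (f^~ a)) -> (forall x a, 0 <= f x a <= 1)%R ->
  px.-integrable setT (EFin \o fun x => \sum_a pie x a * f x a)%R.
Proof.
have [_ [_ mpie]] := pie_policy.
move=> mf f01; apply: (bounded_integrable px (c := 1%R)).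
  by apply: measurable_sum => a; exact: measurable_funM.
move=> x; have /andP[f0 f1] := policy_average_ge0_le1 x (f01 x).
by rewrite ger0_norm.
Qed.

Variables (K : X -> A -> probability (R * R)%type R) (t : R).
Hypothesis K_kernel : is_outcome_kernel K.

Let surv01 x a : (0 <= surv K x a t <= 1)%R.
Proof. exact: (probability_fine_ge0_le1 (K x a) (measurable_fst_gt t)). Qed.

Let csurv01 x a : (0 <= csurv K t x a <= 1)%R.
Proof. exact: (probability_fine_ge0_le1 (K x a) (measurable_snd_gt t)). Qed.

Let msurv a : measurable_fun setT (fun x => surv K x a t).
Proof. exact: (measurable_fine_kernel K_kernel a (measurable_fst_gt t)). Qed.

Let mcsurv a : measurable_fun setT (fun x => csurv K t x a).
Proof. exact: (measurable_fine_kernel K_kernel a (measurable_snd_gt t)). Qed.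

Lemma integrable_policy_surv_csurv :
  px.-integrable setT
    (EFin \o fun x => \sum_a pie x a * (surv K x a t * csurv K t x a))%R.
Proof.
apply: integrable_policy_average => [a|x a]; first exact: measurable_funM.
have /andP[s0 s1] := surv01 x a; have /andP[c0 c1] := csurv01 x a.
by rewrite mulr_ge0 // mulr_ile1.
Qed.

Lemma policy_value_bias :
  \int[px]_x (\sum_a pie x a * (surv K x a t * csurv K t x a))%:E
    - policy_value px pie K t
  = \int[px]_x (\sum_a pie x a * surv K x a t * (csurv K t x a - 1))%:E.
Proof.
rewrite /policy_value -integralB_EFin //.
- apply: eq_integral => x _; rewrite -EFinB -sumrB; congr EFin.
  apply: eq_bigr => a _.
  by rewrite mulrBr mulr1 mulrA.
- exact: integrable_policy_surv_csurv.
- exact: integrable_policy_average.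
Qed.

End policy_value.

Section naive_estimators.
Context (R : realType) (dX : measure_display) (X : measurableType dX)
  (A : finType) (px : probability X R) (pi0 pie : X -> A -> R)
  (K : X -> A -> probability (R * R)%type R) (t : R)
  (Shat : X -> A -> R -> R)
  (dO : measure_display) (Omega : measurableType dO) (P : probability Omega R)
  (n : nat) (Xs : 'I_n -> Omega -> X) (As : 'I_n -> Omega -> A)
  (Ls Cs : 'I_n -> Omega -> R).
Hypotheses (pi0_policy : is_policy pi0) (pie_policy : is_policy pie)
  (K_kernel : is_outcome_kernel K)
  (support : forall x a, (0 < pie x a)%R -> (0 < pi0 x a)%R)
  (indep : cond_indep_censoring K)
  (mShat : forall a, measurable_fun setT (fun x => Shat x a t))
  (Shat01 : forall x a s, (0 <= Shat x a s <= 1)%R)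
  (data_mble : data_measurable Xs As Ls Cs)
  (law : data_law Xs As Ls Cs P px pi0 K).

Let pie_ge0 x a : (0 <= pie x a)%R. Proof. by case: pie_policy. Qed.

Let mpie a : measurable_fun setT (pie^~ a).
Proof. by case: pie_policy => _ []. Qed.

Let Shat_ge0 x a : (0 <= Shat x a t)%R.
Proof. by case/andP: (Shat01 x a t). Qed.

Lemma iw_ge0 x a : (0 <= iw pie pi0 x a)%R.
Proof. by rewrite divr_ge0 //; case: pi0_policy. Qed.

Lemma measurable_iw a : measurable_fun setT (fun x => iw pie pi0 x a).
Proof.
apply: measurable_funM => //.
apply: measurableT_comp; first exact: measurable_inv.
by case: pi0_policy => _ [].
Qed.

(* Where pi0 vanishes so does pie, by common support; the junk value
   pie / 0 = 0 is then harmless. *)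
Lemma iw_mulr_pi0 x a : (iw pie pi0 x a * pi0 x a = pie x a)%R.
Proof.
have [pi00|pi0_neq0] := eqVneq (pi0 x a) 0%R; last by rewrite divfK.
rewrite pi00 mulr0; apply/esym/eqP; rewrite eq_le pie_ge0 andbT leNgt.
by apply/negP => /support; rewrite pi00 ltxx.
Qed.

Lemma integral_weighted_data i (E : set (R * R)) (k : X -> A -> R) :
  measurable E -> (forall a, measurable_fun setT (k^~ a)) ->
  (forall x a, 0 <= k x a)%R ->
  \int[P]_w (\1_[set w | E (Ls i w, Cs i w)] w
             * (iw pie pi0 (Xs i w) (As i w) * k (Xs i w) (As i w)))%:E
  = \int[px]_x (\sum_a pie x a * k x a * fine (K x a E))%:E.
Proof.
move=> mE mk k0.
rewrite (integral_data pi0_policy K_kernel data_mble law i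
  (h := fun x a => iw pie pi0 x a * k x a)%R mE).
- apply: eq_integral => x _; congr EFin; apply: eq_bigr => a _.
  by rewrite mulrACA iw_mulr_pi0 mulrA.
- by move=> a; apply: measurable_funM => //; exact: measurable_iw.
- by move=> x a; rewrite mulr_ge0 // iw_ge0.
Qed.

Let Et := [set y : R * R | (t < y.1)%R] `&` [set y | (t < y.2)%R].

Let measurable_Et : measurable Et.
Proof. exact: measurableI (measurable_fst_gt t) (measurable_snd_gt t). Qed.

Lemma fine_kernel_survival x a :
  fine (K x a Et) = (surv K x a t * csurv K t x a)%R.
Proof.
have gtE := measurable_gt t.
have -> : Et = [set s | (t < s)%R] `*` [set s | (t < s)%R] by [].
rewrite indep //.
have -> : [set s | (t < s)%R] `*` [set: R] = [set y | (t < y.1)%R].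
  by apply/seteqP; split => y /= => [[]|].
have -> : [set: R] `*` [set s | (t < s)%R] = [set y | (t < y.2)%R].
  by apply/seteqP; split => y /= => [[]|].
rewrite fineM // fin_num_measure //.
- exact: measurable_fst_gt.
- exact: measurable_snd_gt.
Qed.

Lemma indic_obs_time i w :
  Defs.indic (t < obs_time Ls Cs i w)%R
  = \1_[set w | Et (Ls i w, Cs i w)] w :> R.
Proof.
rewrite /Defs.indic /obs_time lt_min indicE.
case: ifPn => [/andP[tL tC]|tLC]; first by rewrite mem_set.
by rewrite memNset //= => -[tL tC]; rewrite tL tC in tLC.
Qed.

Let J := \int[px]_x (\sum_a pie x a * (surv K x a t * csurv K t x a))%:E.
Let Q := \int[px]_x (\sum_a pie x a * Shat x a t)%:E.

Let J_fin : J \is a fin_num.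
Proof.
apply: integrable_fin_num => //.
exact: integrable_policy_surv_csurv.
Qed.

Let Q_fin : Q \is a fin_num.
Proof. exact/integrable_fin_num/integrable_policy_average. Qed.

Let ips_term i w :=
  (iw pie pi0 (Xs i w) (As i w) * Defs.indic (t < obs_time Ls Cs i w))%R.
Let model_term i w :=
  (iw pie pi0 (Xs i w) (As i w) * Shat (Xs i w) (As i w) t)%R.
Let direct_term i w := (\sum_b pie (Xs i w) b * Shat (Xs i w) b t)%R.

Lemma integral_ips_term i : \int[P]_w (ips_term i w)%:E = J.
Proof.
transitivity (\int[P]_w (\1_[set w | Et (Ls i w, Cs i w)] w
                        * (iw pie pi0 (Xs i w) (As i w) * 1))%:E).
  by apply: eq_integral => w _; rewrite /ips_term indic_obs_time mulr1 mulrC.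
rewrite (integral_weighted_data i (k := fun _ _ => 1%R) measurable_Et) //.
apply: eq_integral => x _; congr EFin; apply: eq_bigr => a _.
by rewrite mulr1 fine_kernel_survival.
Qed.

Lemma integral_model_term i : \int[P]_w (model_term i w)%:E = Q.
Proof.
transitivity
  (\int[P]_w (\1_[set w | setT (Ls i w, Cs i w)] w * model_term i w)%:E).
  by apply: eq_integral => w _; rewrite indicE mem_set // mul1r.
rewrite (integral_weighted_data i (k := fun x a => Shat x a t) measurableT) //.
apply: eq_integral => x _; congr EFin; apply: eq_bigr => a _.
by rewrite probability_setT mulr1.
Qed.

Lemma integral_direct_term i : \int[P]_w (direct_term i w)%:E = Q.
Proof.
transitivity (\int[P]_w (\1_[set w | setT (Ls i w, Cs i w)] w
                        * (fun x (_ : A) => \sum_b pie x b * Shat x b t)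
                            (Xs i w) (As i w))%:E).
  by apply: eq_integral => w _; rewrite indicE mem_set // mul1r.
rewrite (integral_data pi0_policy K_kernel data_mble law i
  (h := fun x (_ : A) => \sum_b pie x b * Shat x b t)%R measurableT) //.
- apply: eq_integral => x _; rewrite -mulr_sumr; congr EFin.
  under [X in (_ * X)%R]eq_bigr do rewrite probability_setT mulr1.
  by case: pi0_policy => _ [-> _]; rewrite mulr1.
- by move=> a; apply: measurable_sum => b; exact: measurable_funM.
- by move=> x a; rewrite sumr_ge0 // => b _; rewrite mulr_ge0.
Qed.

Let ips_term_ge0 i w : (0 <= ips_term i w)%R.
Proof. by rewrite /ips_term indic_obs_time mulr_ge0 ?iw_ge0. Qed.

Let model_term_ge0 i w : (0 <= model_term i w)%R.
Proof. by rewrite mulr_ge0 ?iw_ge0. Qed.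

Let direct_term_ge0 i w : (0 <= direct_term i w)%R.
Proof. by rewrite sumr_ge0 // => b _; rewrite mulr_ge0. Qed.

Let measurable_ips_term i : measurable_fun setT (ips_term i).
Proof.
rewrite /ips_term; under eq_fun do rewrite indic_obs_time mulrC.
apply: measurable_funM.
  exact/measurable_indic/(measurable_outcome_event data_mble i measurable_Et).
exact: (measurable_fun_data data_mble i measurable_iw).
Qed.

Let measurable_model_term i : measurable_fun setT (model_term i).
Proof.
apply: (measurable_fun_data data_mble i
  (h := fun x a => iw pie pi0 x a * Shat x a t)%R).
by move=> a; apply: measurable_funM => //; exact: measurable_iw.
Qed.

Let measurable_direct_term i : measurable_fun setT (direct_term i).
Proof.
apply: (measurable_fun_data data_mble i
  (h := fun x (_ : A) => \sum_b pie x b * Shat x b t)%R) => a.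
by apply: measurable_sum => b; exact: measurable_funM.
Qed.

Lemma integral_V_IPS (n_gt0 : (0 < n)%N) :
  \int[P]_w (V_IPS Xs As Ls Cs pie pi0 t w)%:E = J.
Proof.
rewrite -(fineK J_fin); apply: (ge0_integral_mean (g := ips_term)) => // i.
by rewrite integral_ips_term fineK.
Qed.

Lemma integral_V_DR (n_gt0 : (0 < n)%N) :
  \int[P]_w (V_DR Xs As Ls Cs pie pi0 Shat t w)%:E = J.
Proof.
have -> : V_DR Xs As Ls Cs pie pi0 Shat t = fun w => (n%:R^-1 *
    \sum_(i < n) (ips_term i w + direct_term i w - model_term i w))%R.
  apply/funext => w; congr (_ * _)%R; apply: eq_bigr => i _.
  by rewrite mulrBr addrAC.
rewrite -(fineK J_fin) -[fine J](addrK (fine Q)).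
apply: (integral_meanB (f := fun i w => ips_term i w + direct_term i w)%R)
  => //.
- by move=> i; exact: measurable_funD.
- by move=> i w; rewrite addr_ge0.
- move=> i; under eq_integral do rewrite EFinD.
  rewrite ge0_integralD //.
  + by rewrite integral_ips_term integral_direct_term EFinD !fineK.
  + by move=> w _; rewrite lee_fin.
  + exact/measurable_EFinP.
  + by move=> w _; rewrite lee_fin.
  + exact/measurable_EFinP.
- by move=> i; rewrite integral_model_term fineK.
Qed.

End naive_estimators.

Local Close Scope ereal_scope.

Theorem proposition1 (R : realType) (dX : measure_display) (X : measurableType dX)
  (A : finType) (px : probability X R) (pi0 pie : X -> A -> R)
  (K : X -> A -> probability (R * R)%type R) (t : R)
  (Shat : X -> A -> R -> R)
  (dO : measure_display) (Omega : measurableType dO) (P : probability Omega R)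
  (n : nat) (Xs : 'I_n -> Omega -> X) (As : 'I_n -> Omega -> A)
  (Ls Cs : 'I_n -> Omega -> R) :
  (0 < n)%N -> 0 <= t ->
  is_policy pi0 -> is_policy pie -> is_outcome_kernel K ->
  (forall x a, 0 < pie x a -> 0 < pi0 x a) ->
  cond_indep_censoring K ->
  censoring_present px pi0 K ->
  (forall a, measurable_fun setT (fun x => Shat x a t)) ->
  (forall x a s, 0 <= Shat x a s <= 1) ->
  data_measurable Xs As Ls Cs ->
  data_law Xs As Ls Cs P px pi0 K ->
  data_indep Xs As Ls Cs P ->
  let bias := (\int[px]_x
       (\sum_(a : A) pie x a * surv K x a t * (csurv K t x a - 1))%:E)%E in
  ((\int[P]_w (V_IPS Xs As Ls Cs pie pi0 t w)%:E) - policy_value px pie K t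
     = bias)%E /\
  ((\int[P]_w (V_DR Xs As Ls Cs pie pi0 Shat t w)%:E) - policy_value px pie K t
     = bias)%E.
Proof.
move=> n_gt0 _ pi0_policy pie_policy K_kernel support indep _ mShat Shat01
  data_mble law _ bias.
rewrite /bias -(policy_value_bias px pie_policy t K_kernel).
rewrite (integral_V_IPS (px := px) (K := K) t) //.
by rewrite (integral_V_DR (px := px) (K := K)).
Qed.
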